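(* Let $d\in\mathbb{N}$, $Q=[-1/2,1/2]^d$, let $z\in\mathbb{R}^d$ be a unit vector and let $s>0$. Then $$|\{y\in Q:\langle z,y\rangle\ge s\}|\le e^{-\frac78 s^2},$$ where $|\cdot|$ denotes Lebesgue measure. *)

From Stdlib Require Import Reals.
Open Scope R_scope.

(* Points of R^d are represented as functions nat -> R; only the
   coordinates 0..d-1 are ever inspected. *)

Fixpoint sumd (d : nat) (f : nat -> R) : R :=
  match d with
  | O => 0
  | S n => sumd n f + f n
  end.

Fixpoint prodd (d : nat) (f : nat -> R) : R :=
  match d with
  | O => 1
  | S n => prodd n f * f n
  end.

Definition inner (d : nat) (z y : nat -> R) : R := sumd d (fun i => z i * y i).

Definition in_box (d : nat) (a b y : nat -> R) : Prop :=
  forall i, (i < d)%nat -> a i <= y i <= b i.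

Definition box_vol (d : nat) (a b : nat -> R) : R := prodd d (fun i => b i - a i).

(* Lebesgue (outer) measure in R^d, defined as the infimum over countable
   covers by closed boxes of the total volume.  [leb_measure_le d A c]
   literally unfolds "lambda_d(A) <= c":  for every eps > 0 there is a
   countable cover of A by boxes whose total volume is <= c + eps. *)
Definition leb_measure_le (d : nat) (A : (nat -> R) -> Prop) (c : R) : Prop :=
  forall eps : R, 0 < eps ->
    exists (a b : nat -> nat -> R) (l : R),
      (forall k i, (i < d)%nat -> a k i <= b k i) /\
      (forall y, A y -> exists k, in_box d (a k) (b k) y) /\
      infinite_sum (fun k => box_vol d (a k) (b k)) l /\
      l <= c + eps.

Definition cubeQ (d : nat) (y : nat -> R) : Prop :=
  forall i, (i < d)%nat -> -(1/2) <= y i <= 1/2.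

From Stdlib Require Import Reals Lra Lia List.
Open Scope R_scope.

(* Chernoff's bound, proved by induction on the dimension with finite box
   covers.  Cut the last coordinate of the cube into 2m slabs of width
   h = 1/(2m) centred at +-c_j, c_j = (j + 1/2) h.  On the slab centred at c,
   z_d y_d <= z_d c + |z_d| h/2, so that slab is covered by a lower-dimensional
   cover at a shifted level times [c - h/2, c + h/2].  Pairing opposite slabs,
   coordinate d contributes the factor
   exp(lam |z_d| h/2) * h sum_j 2 cosh(lam z_d c_j) <= exp(lam |z_d| h/2 + 11/40 lam^2 z_d^2),
   since cosh x <= exp(11/10 x^2) (by Taylor for |x| <= 1/11, then for all x by
   cosh 2x = 2 cosh^2 x - 1).  With |z| = 1, lam = 20s/11 and m so large that
   the h-terms contribute at most s^2/44, the exponent is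
   -(10/11) s^2 + s^2/44 = -(39/44) s^2 <= -(7/8) s^2. *)

Lemma sumd_ext d f g :
  (forall i, (i < d)%nat -> f i = g i) -> sumd d f = sumd d g.
Proof.
  induction d as [|d IH]; intros H; simpl; auto.
  rewrite IH, H by (auto; intros; apply H; lia). reflexivity.
Qed.

Lemma prodd_ext d f g :
  (forall i, (i < d)%nat -> f i = g i) -> prodd d f = prodd d g.
Proof.
  induction d as [|d IH]; intros H; simpl; auto.
  rewrite IH, H by (auto; intros; apply H; lia). reflexivity.
Qed.

Lemma sumd_le d f g :
  (forall i, (i < d)%nat -> f i <= g i) -> sumd d f <= sumd d g.
Proof.
  induction d as [|d IH]; intros H; simpl; [lra|].
  assert (sumd d f <= sumd d g) by (apply IH; intros; apply H; lia).
  assert (f d <= g d) by (apply H; lia). lra.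
Qed.

Lemma sumd_add d f g : sumd d (fun i => f i + g i) = sumd d f + sumd d g.
Proof. induction d as [|d IH]; simpl; [lra|]. rewrite IH. ring. Qed.

Lemma sumd_scal d a f : sumd d (fun i => a * f i) = a * sumd d f.
Proof. induction d as [|d IH]; simpl; [ring|]. rewrite IH. ring. Qed.

Lemma sumd_const d c : sumd d (fun _ => c) = INR d * c.
Proof. induction d as [|d IH]; simpl sumd; [simpl; lra|]. rewrite IH, S_INR. ring. Qed.

Lemma prodd_pos d f : (forall i, 0 < f i) -> 0 < prodd d f.
Proof. intros H; induction d; simpl; [lra|]. pose proof (H d); nra. Qed.

Lemma prodd_exp d f : prodd d (fun i => exp (f i)) = exp (sumd d f).
Proof. induction d as [|d IH]; simpl; [rewrite exp_0; auto|]. rewrite IH, exp_plus. auto. Qed.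

Lemma exp_le x y : x <= y -> exp x <= exp y.
Proof. intros [H|<-]; [left; apply exp_increasing; auto | lra]. Qed.

Lemma exp_le_quadratic x : x <= 1/11 -> exp x <= 1 + x + 11/10 * x^2.
Proof.
  intros Hx.
  pose proof (exp_ineq1_le (-x)) as Hopp.
  assert (Hinv : exp x * exp (-x) = 1) by (rewrite <- exp_plus, Rplus_opp_r; apply exp_0).
  pose proof (exp_pos x).
  assert (1 <= (1 + x + 11/10 * x^2) * (1 - x)) by nra.
  nra.
Qed.

Lemma cosh_le_exp_sq_small x : -(1/11) <= x <= 1/11 -> cosh x <= exp (11/10 * x^2).
Proof.
  intros Hx. unfold cosh.
  pose proof (exp_le_quadratic x ltac:(lra)).
  pose proof (exp_le_quadratic (-x) ltac:(lra)).
  pose proof (exp_ineq1_le (11/10 * x^2)). nra.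
Qed.

Lemma cosh_double x : cosh x = 2 * cosh (x/2) ^ 2 - 1.
Proof.
  unfold cosh.
  replace (exp x) with (exp (x/2) * exp (x/2)) by (rewrite <- exp_plus; f_equal; field).
  replace (exp (-x)) with (exp (-(x/2)) * exp (-(x/2)))
    by (rewrite <- exp_plus; f_equal; field).
  assert (exp (x/2) * exp (-(x/2)) = 1) by (rewrite <- exp_plus, Rplus_opp_r; apply exp_0).
  nra.
Qed.

Lemma cosh_pos x : 0 < cosh x.
Proof. unfold cosh. pose proof (exp_pos x); pose proof (exp_pos (-x)); lra. Qed.

Lemma cosh_le_exp_sq_bounded n x :
  -(2^n/11) <= x <= 2^n/11 -> cosh x <= exp (11/10 * x^2).
Proof.
  revert x; induction n as [|n IH]; intros x Hx.
  - apply cosh_le_exp_sq_small. simpl in Hx. lra.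
  - rewrite cosh_double.
    assert (Hhalf : cosh (x/2) <= exp (11/10 * (x/2)^2)) by (apply IH; simpl in Hx; lra).
    pose proof (cosh_pos (x/2)).
    set (w := exp (11/10 * (x/2)^2)) in *.
    assert (Hw : exp (11/10 * x^2) = (w^2)^2).
    { unfold w. set (q := 11/10 * (x/2)^2).
      replace (11/10 * x^2) with (q + q + q + q) by (unfold q; field).
      rewrite !exp_plus. ring. }
    rewrite Hw.
    assert (cosh (x/2) ^ 2 <= w^2) by (apply pow_incr; lra).
    pose proof (pow2_ge_0 (w^2 - 1)). nra.
Qed.

Lemma cosh_le_exp_sq x : cosh x <= exp (11/10 * x^2).
Proof.
  destruct (INR_archimed 1 (11 * Rabs x) ltac:(lra)) as [n Hn].
  apply (cosh_le_exp_sq_bounded n).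
  assert (Hpow : INR n <= 2 ^ n).
  { clear Hn; induction n as [|n IH]; [simpl; lra|]. rewrite S_INR. simpl pow.
    assert (1 <= 2^n) by (apply pow_R1_Rle; lra). lra. }
  pose proof (Rle_abs x). pose proof (Rle_abs (-x)). rewrite Rabs_Ropp in *. lra.
Qed.

Lemma exp_add_exp_opp_le a c :
  -(1/2) <= c <= 1/2 -> exp (a * c) + exp (- (a * c)) <= 2 * exp (11/40 * a^2).
Proof.
  intros Hc. pose proof (cosh_le_exp_sq (a * c)) as Hch. unfold cosh in Hch.
  assert (exp (11/10 * (a * c)^2) <= exp (11/40 * a^2)).
  { apply exp_le. assert (c^2 <= 1/4) by nra. pose proof (pow2_ge_0 a). nra. }
  lra.
Qed.

Definition box : Type := ((nat -> R) * (nat -> R))%type.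

Fixpoint boxes_vol (d : nat) (L : list box) : R :=
  match L with
  | nil => 0
  | p :: L' => box_vol d (fst p) (snd p) + boxes_vol d L'
  end.

Definition box_cover (d : nat) (A : (nat -> R) -> Prop) (V : R) : Prop :=
  exists L : list box,
    (forall p, In p L -> forall i, (i < d)%nat -> fst p i <= snd p i) /\
    (forall y, A y -> exists p, In p L /\ in_box d (fst p) (snd p) y) /\
    boxes_vol d L <= V.

Lemma box_cover_weaken d (A B : (nat -> R) -> Prop) V W :
  (forall y, A y -> B y) -> box_cover d B V -> V <= W -> box_cover d A W.
Proof. intros HAB [L [Hdeg [Hcov Hvol]]] HVW. exists L; repeat split; auto; lra. Qed.

Lemma box_cover_empty d (A : (nat -> R) -> Prop) V :
  (forall y, ~ A y) -> 0 <= V -> box_cover d A V.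
Proof.
  intros HA HV. exists nil; repeat split; simpl; auto.
  - intros p [].
  - intros y Hy; contradiction (HA y Hy).
Qed.

Lemma boxes_vol_app d L1 L2 : boxes_vol d (L1 ++ L2) = boxes_vol d L1 + boxes_vol d L2.
Proof. induction L1 as [|p L1 IH]; simpl; [lra|]. rewrite IH; lra. Qed.

Lemma box_cover_union d (A B : (nat -> R) -> Prop) V W :
  box_cover d A V -> box_cover d B W -> box_cover d (fun y => A y \/ B y) (V + W).
Proof.
  intros [L1 [H1 [H2 H3]]] [L2 [G1 [G2 G3]]].
  exists (L1 ++ L2); repeat split.
  - intros p Hp. apply in_app_or in Hp as [Hp|Hp]; auto.
  - intros y [Hy|Hy].
    + destruct (H2 y Hy) as [p [Hp Hb]]. exists p; split; auto. apply in_or_app; auto.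
    + destruct (G2 y Hy) as [p [Hp Hb]]. exists p; split; auto. apply in_or_app; auto.
  - rewrite boxes_vol_app; lra.
Qed.

Definition box0 : box := (fun _ => 0, fun _ => 0).

Lemma box_cover_dim0 (A : (nat -> R) -> Prop) : box_cover 0 A 1.
Proof.
  exists (box0 :: nil); repeat split.
  - intros q _ i Hi; lia.
  - intros y _. exists box0; split; [left; auto|]. intros i Hi; lia.
  - unfold boxes_vol, box_vol; simpl. lra.
Qed.

Definition extend (d : nat) (a : nat -> R) (x : R) : nat -> R :=
  fun i => if Nat.ltb i d then a i else x.

Lemma box_vol_extend d a b al be :
  box_vol (S d) (extend d a al) (extend d b be) = box_vol d a b * (be - al).
Proof.
  unfold box_vol; simpl. unfold extend at 3 4. rewrite Nat.ltb_irrefl. f_equal.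
  apply prodd_ext. intros i Hi. unfold extend. rewrite (proj2 (Nat.ltb_lt i d) Hi). auto.
Qed.

Lemma box_cover_extend d (B : (nat -> R) -> Prop) V al be :
  box_cover d B V -> al <= be ->
  box_cover (S d) (fun y => B y /\ al <= y d <= be) (V * (be - al)).
Proof.
  intros [L [Hdeg [Hcov Hvol]]] Hab.
  set (lift := fun p : box => (extend d (fst p) al, extend d (snd p) be)).
  exists (map lift L); repeat split.
  - intros p Hp i Hi. apply in_map_iff in Hp as [q [<- Hq]].
    simpl. unfold extend. destruct (Nat.ltb i d) eqn:E; auto.
    apply Hdeg; auto. apply Nat.ltb_lt; auto.
  - intros y [Hy Hyd]. destruct (Hcov y Hy) as [p [Hp Hb]].
    exists (lift p); split; [apply in_map; auto|].
    intros i Hi. simpl. unfold extend. destruct (Nat.ltb i d) eqn:E.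
    + apply Hb. apply Nat.ltb_lt; auto.
    + apply Nat.ltb_ge in E. replace i with d by lia. auto.
  - assert (Hv : forall L', boxes_vol (S d) (map lift L') = boxes_vol d L' * (be - al)).
    { induction L' as [|p L' IH]; simpl; [lra|]. rewrite IH, box_vol_extend. ring. }
    rewrite Hv. apply Rmult_le_compat_r; lra.
Qed.

Lemma box_cover_slices d m (A : (nat -> R) -> Prop) (u : nat -> R) h
  (B : nat -> (nat -> R) -> Prop) (V : nat -> R) :
  0 <= h ->
  (forall j, (j < m)%nat -> box_cover d (B j) (V j)) ->
  (forall y, A y -> exists j, (j < m)%nat /\ u j - h/2 <= y d <= u j + h/2 /\ B j y) ->
  box_cover (S d) A (sumd m (fun j => V j * h)).
Proof.
  revert A. induction m as [|m IH]; intros A Hh HB HA.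
  - apply box_cover_empty; simpl; [|lra].
    intros y Hy. destruct (HA y Hy) as [j [Hj _]]; lia.
  - simpl. apply box_cover_weaken with
      (B := fun y => (exists j, (j < m)%nat /\ u j - h/2 <= y d <= u j + h/2 /\ B j y) \/
                     (B m y /\ u m - h/2 <= y d <= u m + h/2))
      (V := sumd m (fun j => V j * h) + V m * (u m + h/2 - (u m - h/2)));
      [| | apply Req_le; field].
    + intros y Hy. destruct (HA y Hy) as [j [Hj [Hyd HBj]]].
      destruct (Nat.eq_dec j m) as [->|Hne]; [right; auto|].
      left; exists j; split; [lia | split; assumption].
    + apply box_cover_union.
      * apply IH; auto; intros j Hj; apply HB; lia.
      * apply box_cover_extend; [apply HB; lia | lra].
Qed.

(* Padding a list with the degenerate box [box0] costs nothing in volume as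
   soon as d > 0; for d = 0 every box has volume 1. *)
Lemma sum_f_R0_nth_boxes_vol d L n :
  (0 < d)%nat -> (length L <= S n)%nat ->
  sum_f_R0 (fun k => box_vol d (fst (nth k L box0)) (snd (nth k L box0))) n = boxes_vol d L.
Proof.
  intros Hd. assert (H0 : box_vol d (fst box0) (snd box0) = 0).
  { destruct d; [lia|]. unfold box_vol; simpl. ring. }
  revert n; induction L as [|p L IH]; intros n Hn.
  - simpl. transitivity (sum_f_R0 (fun _ => 0) n).
    + apply sum_eq. intros [|i] _; auto.
    + rewrite sum_cte; ring.
  - destruct n as [|n].
    + destruct L; [simpl; lra | simpl in Hn; lia].
    + rewrite decomp_sum by lia. simpl. f_equal. apply IH. simpl in Hn; lia.
Qed.

Lemma box_cover_measure_le d A V c :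
  (0 < d)%nat -> box_cover d A V -> V <= c -> leb_measure_le d A c.
Proof.
  intros Hd [L [Hdeg [Hcov Hvol]]] Hc eps Heps.
  exists (fun k => fst (nth k L box0)), (fun k => snd (nth k L box0)), (boxes_vol d L).
  repeat split.
  - intros k i Hi. destruct (Nat.lt_ge_cases k (length L)).
    + apply Hdeg; auto. apply nth_In; auto.
    + rewrite nth_overflow by auto. simpl. lra.
  - intros y Hy. destruct (Hcov y Hy) as [p [Hp Hb]].
    destruct (In_nth L p box0 Hp) as [k [_ Hk]]. exists k. rewrite Hk. auto.
  - intros e He. exists (length L). intros n Hn.
    rewrite sum_f_R0_nth_boxes_vol by lia. unfold Rdist. rewrite Rminus_diag, Rabs_R0. lra.
  - lra.
Qed.

Lemma exists_slice h m x :
  0 < h -> (0 < m)%nat -> 0 <= x <= INR m * h ->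
  exists j, (j < m)%nat /\ INR j * h <= x <= (INR j + 1) * h.
Proof.
  intros Hh. revert x. induction m as [|m IH]; intros x Hm Hx; [lia|].
  destruct (Nat.eq_dec m 0) as [->|Hm0].
  { exists 0%nat. simpl in *. split; [lia | lra]. }
  rewrite S_INR in Hx. destruct (Rle_dec x (INR m * h)).
  - destruct (IH x ltac:(lia) ltac:(lra)) as [j [Hj Hxj]]. exists j; split; [lia | auto].
  - exists m. split; [lia | lra].
Qed.

Lemma mul_le_of_near w x c r : c - r <= x <= c + r -> w * x <= w * c + Rabs w * r.
Proof.
  intros Hx. assert (Hr : Rabs (x - c) <= r) by (apply Rabs_le; lra).
  pose proof (Rle_abs (w * (x - c))). rewrite Rabs_mult in *.
  pose proof (Rmult_le_compat_l _ _ _ (Rabs_pos w) Hr). nra.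
Qed.

Definition cube_slab (d : nat) (z : nat -> R) (t : R) (y : nat -> R) : Prop :=
  cubeQ d y /\ inner d z y >= t.

Definition slab_factor (lam h w : R) : R :=
  exp (lam * Rabs w * h / 2 + 11/40 * lam^2 * w^2).

Definition slab_centre (h : R) (j : nat) : R := (INR j + 1/2) * h.

Section SlabCover.

Variables (lam h : R) (m : nat).
Hypotheses (Hlam : 0 < lam) (Hmh : INR m * h = 1/2).

Lemma width_pos : 0 < h.
Proof. destruct (Rlt_or_le 0 h) as [|Hle]; auto. pose proof (pos_INR m). nra. Qed.

Lemma slices_pos : (0 < m)%nat.
Proof. destruct m; [simpl in Hmh; lra | lia]. Qed.

Lemma slab_centre_bounds j : (j < m)%nat -> 0 <= slab_centre h j <= 1/2.
Proof.
  intros Hj. unfold slab_centre. pose proof width_pos. pose proof (pos_INR j).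
  assert (INR j + 1 <= INR m) by (rewrite <- S_INR; apply le_INR; lia). nra.
Qed.

Lemma slab_centres_cosh_le a :
  h * sumd m (fun j => exp (a * slab_centre h j) + exp (- (a * slab_centre h j)))
  <= exp (11/40 * a^2).
Proof.
  apply Rle_trans with (h * sumd m (fun _ => 2 * exp (11/40 * a^2))).
  - apply Rmult_le_compat_l; [left; apply width_pos|].
    apply sumd_le. intros j Hj. apply exp_add_exp_opp_le.
    pose proof (slab_centre_bounds j Hj). lra.
  - rewrite sumd_const.
    replace (h * (INR m * (2 * exp (11/40 * a^2)))) with
      (2 * (INR m * h) * exp (11/40 * a^2)) by ring.
    rewrite Hmh. lra.
Qed.

Lemma box_cover_cube_slab_slices d z t P (u : nat -> R) (half : (nat -> R) -> Prop) :
  (forall t', box_cover d (cube_slab d z t') (exp (- lam * t') * P)) ->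
  (forall y, cube_slab (S d) z t y -> half y ->
     exists j, (j < m)%nat /\ u j - h/2 <= y d <= u j + h/2) ->
  box_cover (S d) (fun y => cube_slab (S d) z t y /\ half y)
    (sumd m (fun j => exp (- lam * t) * exp (lam * Rabs (z d) * h / 2) * P * h
                      * exp (lam * z d * u j))).
Proof.
  intros IH Hslice.
  set (level := fun j => t - z d * u j - Rabs (z d) * h / 2).
  replace (sumd m _) with (sumd m (fun j => exp (- lam * level j) * P * h)).
  - apply box_cover_slices with (B := fun j => cube_slab d z (level j)) (u := u).
    + left; apply width_pos.
    + intros j _; apply IH.
    + intros y [[HQ Hin] Hhalf].
      destruct (Hslice y (conj HQ Hin) Hhalf) as [j [Hj Hyd]].
      exists j; split; [lia | split; [exact Hyd | split]].
      * intros i Hi. apply HQ; lia.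
      * pose proof (mul_le_of_near (z d) _ _ _ Hyd).
        change (inner (S d) z y) with (inner d z y + z d * y d) in Hin.
        unfold level. lra.
  - apply sumd_ext. intros j _. unfold level.
    replace (- lam * (t - z d * u j - Rabs (z d) * h / 2)) with
      (- lam * t + lam * Rabs (z d) * h / 2 + lam * z d * u j) by field.
    rewrite !exp_plus. ring.
Qed.

Lemma box_cover_cube_slab_succ d z P :
  0 <= P ->
  (forall t, box_cover d (cube_slab d z t) (exp (- lam * t) * P)) ->
  forall t, box_cover (S d) (cube_slab (S d) z t)
              (exp (- lam * t) * (P * slab_factor lam h (z d))).
Proof.
  intros HP IH t. pose proof width_pos as Hh.
  set (c := slab_centre h).
  assert (Hpos := box_cover_cube_slab_slices d z t P c (fun y => 0 <= y d) IH).
  assert (Hneg := box_cover_cube_slab_slices d z t P (fun j => - c j) (fun y => y d <= 0) IH).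
  eapply box_cover_weaken; [| apply box_cover_union; [apply Hpos | apply Hneg] |].
  - intros y Hy. destruct (Rle_or_lt 0 (y d)); [left | right]; split; auto; lra.
  - intros y [HQ _] Hy. assert (Hyd := HQ d ltac:(lia)).
    destruct (exists_slice h m (y d) Hh slices_pos ltac:(lra)) as [j [Hj Hj']].
    exists j; unfold c, slab_centre; split; [auto | lra].
  - intros y [HQ _] Hy. assert (Hyd := HQ d ltac:(lia)).
    destruct (exists_slice h m (- y d) Hh slices_pos ltac:(lra)) as [j [Hj Hj']].
    exists j; unfold c, slab_centre; split; [auto | lra].
  - set (E := exp (- lam * t)). set (X := exp (lam * Rabs (z d) * h / 2)).
    set (a := lam * z d).
    rewrite <- sumd_add.
    rewrite (sumd_ext m _ (fun j => E * X * P * h * (exp (a * c j) + exp (- (a * c j)))))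
      by (intros j _; unfold a; replace (lam * z d * - c j) with (- (lam * z d * c j)) by ring;
          ring).
    rewrite sumd_scal, Rmult_assoc.
    unfold slab_factor. rewrite exp_plus. fold X.
    replace (11/40 * lam^2 * z d ^ 2) with (11/40 * a^2) by (unfold a; ring).
    assert (HK : 0 <= E * X * P).
    { pose proof (exp_pos (- lam * t)). pose proof (exp_pos (lam * Rabs (z d) * h / 2)).
      unfold E, X. apply Rmult_le_pos; [nra | auto]. }
    replace (E * (P * (X * exp (11/40 * a^2)))) with (E * X * P * exp (11/40 * a^2)) by ring.
    apply Rmult_le_compat_l; [auto | apply slab_centres_cosh_le].
Qed.

Lemma box_cover_cube_slab d z t :
  box_cover d (cube_slab d z t) (exp (- lam * t) * prodd d (fun i => slab_factor lam h (z i))).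
Proof.
  revert t; induction d as [|d IH]; intros t; simpl prodd.
  - destruct (Rle_or_lt t 0).
    + apply box_cover_weaken with (B := fun _ => True) (V := 1); auto using box_cover_dim0.
      pose proof (exp_ineq1_le (- lam * t)). nra.
    + apply box_cover_empty; [| pose proof (exp_pos (- lam * t)); lra].
      intros y [_ Hy]. unfold inner in Hy; simpl in Hy. lra.
  - apply box_cover_cube_slab_succ; auto.
    apply Rlt_le, prodd_pos. intros i. apply exp_pos.
Qed.

End SlabCover.

Lemma prodd_slab_factor d lam h z :
  prodd d (fun i => slab_factor lam h (z i)) =
  exp (lam * h / 2 * sumd d (fun i => Rabs (z i)) + 11/40 * lam^2 * inner d z z).
Proof.
  unfold slab_factor, inner. rewrite prodd_exp, <- !sumd_scal, <- sumd_add. f_equal.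
  apply sumd_ext. intros i _. field.
Qed.

Lemma exists_fine_width a eps :
  0 < eps -> exists m, (0 < m)%nat /\ a * / (2 * INR m) <= eps.
Proof.
  intros He. destruct (INR_archimed eps (a / 2) He) as [n Hn].
  exists (S n). split; [lia|]. rewrite S_INR. pose proof (pos_INR n).
  assert (Hq : a * / (2 * (INR n + 1)) * (INR n + 1) = a / 2) by (field; lra).
  nra.
Qed.

Theorem mainTheorem13 (d : nat) (z : nat -> R) (s : R)
  (hz : inner d z z = 1) (hs : 0 < s) :
  leb_measure_le d (fun y => cubeQ d y /\ inner d z y >= s)
    (exp (- (7/8) * s ^ 2)).
Proof.
  destruct d as [|d]; [unfold inner in hz; simpl in hz; lra|].
  set (Sz := sumd (S d) (fun i => Rabs (z i))).
  destruct (exists_fine_width Sz (s / 40)) as [m [Hm Hfine]]; [lra|].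
  set (h := / (2 * INR m)) in Hfine.
  set (lam := 20 * s / 11).
  assert (Hmh : INR m * h = 1/2) by (unfold h; field; apply not_0_INR; lia).
  apply box_cover_measure_le with
    (exp (- lam * s) * prodd (S d) (fun i => slab_factor lam h (z i))).
  - lia.
  - apply (box_cover_cube_slab lam h m); [unfold lam; lra | exact Hmh].
  - rewrite prodd_slab_factor, hz, <- exp_plus. apply exp_le. fold Sz.
    unfold lam. nra.
Qed.
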